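(* Neither the forgetful functor $\mathbf{ubal}\to\mathsf{Set}$ nor the forgetful functor $\mathbf{balg}\to\mathsf{Set}$ has a left adjoint.
   Context: All rings are commutative and unital. An $\ell$-algebra is a commutative unital $\mathbb{R}$-algebra $A$ with a partial order $\le$ making $(A,\le)$ a lattice, such that $a\le b$ implies $a+c\le b+c$, $0\le a,b$ implies $0\le ab$, and $0\le a$, $0\le r\in\mathbb{R}$ imply $0\le r\cdot a$. $A$ is bounded if for each $a$ there is $n\in\mathbb{N}$ with $a\le n\cdot1$, archimedean if $n\cdot a\le b$ for all $n$ implies $a\le0$. $\mathbf{bal}$ is the category of bounded archimedean $\ell$-algebras and unital $\ell$-algebra homomorphisms. For $A\in\mathbf{bal}$, $|a|=a\vee(-a)$ and $\|a\|=\inf\{r\in\mathbb{R}\mid |a|\le r\cdot1\}$; $A$ is uniformly complete if it is complete with respect to this norm, and $\mathbf{ubal}$ is the full subcategory of uniformly complete objects. An $\ell$-algebra is Dedekind complete if every subset bounded above has a least upper bound. The idempotents $\mathrm{Id}(A)$ of a commutative ring form a boolean algebra with $e\vee f=e+f-ef$, $e\wedge f=ef$, $\neg e=1-e$. A basic algebra is a Dedekind complete $A\in\mathbf{bal}$ with $\mathrm{Id}(A)$ atomic. A normal homomorphism between basic algebras is a $\mathbf{bal}$-morphism preserving all existing joins and meets. $\mathbf{balg}$ is the category of basic algebras and normal homomorphisms. *)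

From HB Require Import structures.
From mathcomp Require Import all_boot all_order all_algebra.
From mathcomp Require Import boolp classical_sets reals Rstruct.
From Stdlib Require Import Rdefinitions.

Set Implicit Arguments.
Unset Strict Implicit.
Unset Printing Implicit Defensive.

Import Order.TTheory GRing.Theory Num.Theory.
Local Open Scope ring_scope.

Notation Rr := Rdefinitions.R.

(* l-algebras: commutative unital R-algebras (possibly trivial) with a
   lattice order compatible with the algebra structure.                *)
Record lalg := LAlg {
  lcar :> comPzRingType;
  lscale : Rr -> lcar -> lcar;
  lle : lcar -> lcar -> Prop;
  ljoin : lcar -> lcar -> lcar;
  lmeet : lcar -> lcar -> lcar;
  lscale1 : forall a, lscale 1 a = a;
  lscaleM : forall (r s : Rr) a, lscale (r * s) a = lscale r (lscale s a);
  lscaleDr : forall (r s : Rr) a, lscale (r + s) a = lscale r a + lscale s a;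
  lscaleDl : forall (r : Rr) a b, lscale r (a + b) = lscale r a + lscale r b;
  lscaleAl : forall (r : Rr) a b, lscale r (a * b) = lscale r a * b;
  lle_refl : forall a, lle a a;
  lle_anti : forall a b, lle a b -> lle b a -> a = b;
  lle_trans : forall a b c, lle a b -> lle b c -> lle a c;
  ljoin_ub_l : forall a b, lle a (ljoin a b);
  ljoin_ub_r : forall a b, lle b (ljoin a b);
  ljoin_least : forall a b c, lle a c -> lle b c -> lle (ljoin a b) c;
  lmeet_lb_l : forall a b, lle (lmeet a b) a;
  lmeet_lb_r : forall a b, lle (lmeet a b) b;
  lmeet_greatest : forall a b c, lle c a -> lle c b -> lle c (lmeet a b);
  lle_add : forall a b c, lle a b -> lle (a + c) (b + c);
  lle_mul : forall a b, lle 0 a -> lle 0 b -> lle 0 (a * b);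
  lle_scale : forall (r : Rr) a, lle 0 a -> 0 <= r -> lle 0 (lscale r a)
}.

Section LAlgDefs.
Variable A : lalg.

Definition lbounded : Prop :=
  forall a : A, exists n : nat, lle a (n%:R : A).

Definition larchimedean : Prop :=
  forall a b : A, (forall n : nat, lle (a *+ n) b) -> lle a 0.

Definition is_bal : Prop := lbounded /\ larchimedean.

Definition labs (a : A) : A := ljoin a (- a).

Definition lnorm (a : A) : Rr := inf [set r : Rr | lle (labs a) (lscale r 1)].

Definition lcauchy (u : nat -> A) : Prop :=
  forall eps : Rr, 0 < eps ->
    exists N : nat, forall m n : nat, leq N m -> leq N n -> lnorm (u m - u n) < eps.

Definition lconverges_to (u : nat -> A) (a : A) : Prop :=
  forall eps : Rr, 0 < eps ->
    exists N : nat, forall n : nat, leq N n -> lnorm (u n - a) < eps.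

Definition uniformly_complete : Prop :=
  forall u : nat -> A, lcauchy u -> exists a : A, lconverges_to u a.

Definition is_ub (S : A -> Prop) (b : A) : Prop := forall s, S s -> lle s b.
Definition is_lb (S : A -> Prop) (b : A) : Prop := forall s, S s -> lle b s.
Definition is_lub (S : A -> Prop) (b : A) : Prop :=
  is_ub S b /\ forall c, is_ub S c -> lle b c.
Definition is_glb (S : A -> Prop) (b : A) : Prop :=
  is_lb S b /\ forall c, is_lb S c -> lle c b.

Definition dedekind_complete : Prop :=
  forall S : A -> Prop, (exists s, S s) -> (exists b, is_ub S b) ->
    exists l, is_lub S l.

(* The boolean algebra Id(A): order e <= f iff e f = e (i.e. e /\ f = e). *)
Definition idem (e : A) : Prop := e * e = e.
Definition idem_atom (e : A) : Prop :=
  idem e /\ e <> 0 /\ forall f, idem f -> f * e = f -> f = 0 \/ f = e.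
Definition idem_atomic : Prop :=
  forall e, idem e -> e <> 0 -> exists a, idem_atom a /\ a * e = a.

Definition is_basic : Prop :=
  is_bal /\ dedekind_complete /\ idem_atomic.

End LAlgDefs.

Definition is_bal_hom (A B : lalg) (f : A -> B) : Prop :=
  (forall a b, f (a + b) = f a + f b) /\
  (forall a b, f (a * b) = f a * f b) /\
  f 1 = 1 /\
  (forall (r : Rr) a, f (lscale r a) = lscale r (f a)) /\
  (forall a b, f (ljoin a b) = ljoin (f a) (f b)) /\
  (forall a b, f (lmeet a b) = lmeet (f a) (f b)).

Definition is_normal_hom (A B : lalg) (f : A -> B) : Prop :=
  is_bal_hom f /\
  (forall (S : A -> Prop) l, is_lub S l -> is_lub (fun y => exists x, S x /\ y = f x) (f l)) /\
  (forall (S : A -> Prop) l, is_glb S l -> is_glb (fun y => exists x, S x /\ y = f x) (f l)).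

(* The forgetful functor to
   Set has a left adjoint iff every set X admits a universal arrow
   (a free object): eta : X -> U(F X) such that every function X -> U(A)
   factors uniquely through eta by a morphism F X -> A. *)
Definition forgetful_has_left_adjoint
  (ob : lalg -> Prop) (hom : forall A B : lalg, (A -> B) -> Prop) : Prop :=
  forall X : Type,
    exists (F : lalg) (eta : X -> F), ob F /\
      forall (A : lalg) (f : X -> A), ob A ->
        (exists g : F -> A, hom F A g /\ forall x, g (eta x) = f x) /\
        (forall g1 g2 : F -> A, hom F A g1 -> hom F A g2 ->
           (forall x, g1 (eta x) = f x) -> (forall x, g2 (eta x) = f x) ->
           forall y, g1 y = g2 y).

Definition ubal_ob (A : lalg) : Prop := is_bal A /\ uniformly_complete A.
Definition balg_ob (A : lalg) : Prop := is_basic A.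

(** The free object on one generator [x] would be bounded, so [x <= n] for
    some natural number [n].  Morphisms are monotone and fix [n], yet the
    universal property yields a morphism into [R] sending [x] to [n + 1].
    Since [R] is both uniformly complete and basic, the argument applies to
    [ubal] and to [balg] alike. *)
From HB Require Import structures.
From mathcomp Require Import all_boot all_order all_algebra.
From mathcomp Require Import boolp classical_sets reals Rstruct.
From Stdlib Require Import Rdefinitions Reals.

Set Implicit Arguments.
Unset Strict Implicit.
Unset Printing Implicit Defensive.

Import Order.TTheory GRing.Theory Num.Theory.
Local Open Scope ring_scope.

Definition R_lalg : lalg.
Proof.
refine (@LAlg (Rr : comPzRingType) (fun r a => r * a) (fun a b => a <= b)
  (fun a b => Num.max a b) (fun a b => Num.min a b)
  _ _ _ _ _ _ _ _ _ _ _ _ _ _ _ _ _).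
- exact: mul1r.
- by move=> r s a; rewrite mulrA.
- by move=> r s a; rewrite mulrDl.
- by move=> r a b; rewrite mulrDr.
- by move=> r a b; rewrite mulrA.
- exact: lexx.
- by move=> a b h1 h2; apply/eqP; rewrite eq_le h1 h2.
- by move=> a b c; apply: le_trans.
- by move=> a b /=; rewrite le_max lexx.
- by move=> a b /=; rewrite le_max lexx orbT.
- by move=> a b c h1 h2 /=; rewrite ge_max h1 h2.
- by move=> a b /=; rewrite ge_min lexx.
- by move=> a b /=; rewrite ge_min lexx orbT.
- by move=> a b c h1 h2 /=; rewrite le_min h1 h2.
- by move=> a b c /=; rewrite lerD2r.
- by move=> a b /= ha hb; rewrite mulr_ge0.
- by move=> r a /= ha hr; rewrite mulr_ge0.
Defined.

Lemma R_lalg_bounded : lbounded R_lalg.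
Proof.
move=> a; exists (Num.bound `|a|)%N => /=.
by apply: le_trans (ler_norm a) _; apply/ltW/archi_boundP/normr_ge0.
Qed.

Lemma R_lalg_archimedean : larchimedean R_lalg.
Proof.
move=> a b /= hab; rewrite leNgt; apply/negP => a_gt0.
set n := Num.bound (`|b| / a).
have b_lt : `|b| < a * n%:R.
  by rewrite mulrC -ltr_pdivrMr // archi_boundP // divr_ge0 // ltW.
have := hab n; rewrite -mulr_natr => b_ge.
by have := le_lt_trans (le_trans b_ge (ler_norm b)) b_lt; rewrite ltxx.
Qed.

Lemma lnorm_R (a : R_lalg) : lnorm a = `|a|.
Proof.
rewrite /lnorm /labs /=.
have absE r : (Num.max a (- a) <= r * 1) = (`|a| <= r).
  by rewrite mulr1 ge_max ler_norml lerNl andbC.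
apply/eqP; rewrite eq_le; apply/andP; split.
- by apply: ge_inf; [exists `|a| => r /=; rewrite absE | rewrite /= absE].
- by apply: lb_le_inf; [exists `|a|; rewrite /= absE | move=> r /=; rewrite absE].
Qed.

Lemma R_lalg_uniformly_complete : uniformly_complete R_lalg.
Proof.
move=> u u_cauchy.
have : Cauchy_crit u.
  move=> eps /RltP eps_gt0; have [N hN] := u_cauchy eps eps_gt0.
  exists N => m n /ssrnat.leP hm /ssrnat.leP hn; apply/RltP.
  by have := hN m n hm hn; rewrite lnorm_R.
move=> /R_complete [l u_to_l]; exists l => eps /RltP eps_gt0.
have [N hN] := u_to_l eps eps_gt0.
by exists N => n /ssrnat.leP hn; rewrite lnorm_R; apply/RltP/hN.
Qed.

Lemma R_lalg_dedekind_complete : dedekind_complete R_lalg.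
Proof.
move=> S [s Ss] [b b_ub].
have S_sup : has_sup (S : set Rr) by split; [exists s | exists b].
exists (sup (S : set Rr)); split.
- by move=> x Sx; apply: sup_upper_bound.
- by move=> c c_ub; apply: ge_sup; [exists s | move=> x /c_ub].
Qed.

Lemma idem_idomain (D : idomainType) (e : D) : e * e = e -> e = 0 \/ e = 1.
Proof.
move=> ee; have : e * (e - 1) == 0 by rewrite mulrBr ee mulr1 subrr.
by rewrite mulf_eq0 subr_eq0 => /orP[] /eqP ->; [left | right].
Qed.

Lemma R_lalg_idem_atomic : idem_atomic R_lalg.
Proof.
move=> e e_idem e_neq0; exists 1; split.
- split; first exact: mul1r.
  by split; [apply/eqP; rewrite oner_eq0 | move=> f f_idem _; apply: idem_idomain].
- by case: (idem_idomain e_idem) => // ->; rewrite mul1r.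
Qed.

Lemma R_lalg_bal : is_bal R_lalg.
Proof. exact: (conj R_lalg_bounded R_lalg_archimedean). Qed.

Lemma R_lalg_ubal : ubal_ob R_lalg.
Proof. exact: (conj R_lalg_bal R_lalg_uniformly_complete). Qed.

Lemma R_lalg_basic : balg_ob R_lalg.
Proof.
exact: (conj R_lalg_bal (conj R_lalg_dedekind_complete R_lalg_idem_atomic)).
Qed.

Section BalHom.
Variables (A B : lalg) (g : A -> B).
Hypothesis g_hom : is_bal_hom g.

Lemma bal_hom_mono (a b : A) : lle a b -> lle (g a) (g b).
Proof.
case: g_hom => _ [_ [_ [_ [g_join _]]]] ab.
have join_ab : ljoin a b = b.
  by apply: lle_anti; [exact: ljoin_least (lle_refl b) | exact: ljoin_ub_r].
by rewrite -join_ab g_join; exact: ljoin_ub_l.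
Qed.

Lemma bal_hom_natr (n : nat) : g n%:R = n%:R.
Proof.
case: g_hom => g_add [_ [g_1 _]]; elim: n => [|n IHn].
- by apply: (addrI (g 0)); rewrite -g_add !addr0.
- by rewrite !mulrS g_add g_1 IHn.
Qed.

End BalHom.

Lemma no_free_lalg_of_bounded (ob : lalg -> Prop)
    (hom : forall A B : lalg, (A -> B) -> Prop) :
  (forall A, ob A -> lbounded A) ->
  (forall A B g, hom A B g -> is_bal_hom g) ->
  ob R_lalg -> ~ forgetful_has_left_adjoint ob hom.
Proof.
move=> ob_bounded hom_bal ob_R free.
have [F [eta [obF univ]]] := free unit.
have [n x_le_n] := ob_bounded F obF (eta tt).
have [[g [g_hom g_eta]] _] := univ R_lalg (fun=> n%:R + 1 : Rr) ob_R.
have := bal_hom_mono (hom_bal _ _ _ g_hom) x_le_n.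
rewrite g_eta bal_hom_natr; last exact: hom_bal _ _ _ g_hom.
by rewrite /= leNgt ltrDl ltr01.
Qed.

Theorem mainTheorem3 :
  ~ forgetful_has_left_adjoint ubal_ob is_bal_hom /\
  ~ forgetful_has_left_adjoint balg_ob is_normal_hom.
Proof.
split.
- apply: no_free_lalg_of_bounded R_lalg_ubal.
  + by move=> A [[A_bounded _] _].
  + by move=> A B g g_hom.
- apply: no_free_lalg_of_bounded R_lalg_basic.
  + by move=> A [[A_bounded _] _].
  + by move=> A B g [g_hom _].
Qed.
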